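(* Let $h:\mathcal{I}\to\mathcal{J}$ have a non-decreasing upper tail with threshold $c\in(\inf\mathcal{I},\sup\mathcal{I})$, let $h^{\star}=\sup_{x<c,\,x\in\mathcal{I}}h(x)$, and define $\tilde h:\mathcal{I}\to\mathcal{J}$ by $\tilde h(x)=h^{\star}$ if $x<c$, $\tilde h(c)=\max\{h(c),h^{\star}\}$, and $\tilde h(x)=h(x)$ if $x>c$. Then: (1) if $h$ is left-continuous, $\tilde h$ is left-continuous; (2) if $h$ is right-continuous, $\tilde h$ is right-continuous.
   Context: $\mathcal{I},\mathcal{J}\subseteq\mathbb{R}$ intervals; $h$ is real-valued whose discontinuities (if any) are jumps at which it is left- or right-continuous. A function $h:\mathcal{I}\to\mathcal{J}$ has a non-decreasing upper tail if there exists $x'\in\mathcal{I}$ such that (1) $h(x)\le h(x')$ for all $x\in\mathcal{I}$ with $x<x'$, and (2) $h(x_1)\le h(x_2)$ for all $x_1,x_2\in\mathcal{I}$ with $x'\le x_1\le x_2$. Its threshold $c$ is the infimum of the (assumed nonempty) set of all such $x'$. *)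

From Stdlib Require Import Reals.
Open Scope R_scope.

Definition is_interval (I : R -> Prop) : Prop :=
  forall x y z, I x -> I z -> x <= y -> y <= z -> I y.

Definition left_cont_at (I : R -> Prop) (h : R -> R) (x : R) : Prop :=
  forall eps, 0 < eps -> exists delta, 0 < delta /\
    forall y, I y -> x - delta < y -> y <= x -> Rabs (h y - h x) < eps.

Definition right_cont_at (I : R -> Prop) (h : R -> R) (x : R) : Prop :=
  forall eps, 0 < eps -> exists delta, 0 < delta /\
    forall y, I y -> x <= y -> y < x + delta -> Rabs (h y - h x) < eps.

Definition left_continuous (I : R -> Prop) (h : R -> R) : Prop :=
  forall x, I x -> left_cont_at I h x.

Definition right_continuous (I : R -> Prop) (h : R -> R) : Prop :=
  forall x, I x -> right_cont_at I h x.

(* Existence of (finite) one-sided limits of h at x within I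
   (vacuous when I has no points on that side of x). *)
Definition has_left_lim (I : R -> Prop) (h : R -> R) (x : R) : Prop :=
  exists L, forall eps, 0 < eps -> exists delta, 0 < delta /\
    forall y, I y -> x - delta < y -> y < x -> Rabs (h y - L) < eps.

Definition has_right_lim (I : R -> Prop) (h : R -> R) (x : R) : Prop :=
  exists L, forall eps, 0 < eps -> exists delta, 0 < delta /\
    forall y, I y -> x < y -> y < x + delta -> Rabs (h y - L) < eps.

(* Standing assumption: every discontinuity of h on I is a jump
   (both one-sided limits exist), at which h is left- or right-continuous.
   At continuity points this holds automatically. *)
Definition jump_regular (I : R -> Prop) (h : R -> R) : Prop :=
  forall x, I x ->
    has_left_lim I h x /\ has_right_lim I h x /\
    (left_cont_at I h x \/ right_cont_at I h x).

Definition upper_tail_point (I : R -> Prop) (h : R -> R) (x' : R) : Prop :=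
  I x' /\
  (forall x, I x -> x < x' -> h x <= h x') /\
  (forall x1 x2, I x1 -> I x2 -> x' <= x1 -> x1 <= x2 -> h x1 <= h x2).

Definition upper_tail_threshold (I : R -> Prop) (h : R -> R) (c : R) : Prop :=
  (exists x', upper_tail_point I h x') /\
  (forall x', upper_tail_point I h x' -> c <= x') /\
  (forall b, (forall x', upper_tail_point I h x' -> b <= x') -> b <= c).

Definition htilde (h : R -> R) (c hs : R) (x : R) : R :=
  if Rlt_dec x c then hs
  else if Rle_dec x c then Rmax (h c) hs
  else h x.

(* Away from c, htilde agrees locally with the constant hs (left of c) or with
   h (right of c), so only the point c matters.  If h is left-continuous, h c
   is a limit of values h y <= hs with y < c, hence h c <= hs and htilde is the
   constant hs on (-oo, c].  If h is right-continuous, then for x < c we have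
   h x <= h x' for every tail point x', and tail points accumulate at c from
   the right, so h x <= h c; hence hs <= h c and htilde = h on [c, +oo). *)

From Stdlib Require Import Reals Lra Classical.
Open Scope R_scope.

Lemma htilde_lt h c hs y : y < c -> htilde h c hs y = hs.
Proof. intros Hy; unfold htilde; destruct (Rlt_dec y c); [reflexivity | lra]. Qed.

Lemma htilde_gt h c hs y : c < y -> htilde h c hs y = h y.
Proof.
  intros Hy; unfold htilde.
  destruct (Rlt_dec y c); [lra |]; destruct (Rle_dec y c); [lra | reflexivity].
Qed.

Lemma htilde_le_c h c hs y : h c <= hs -> y <= c -> htilde h c hs y = hs.
Proof.
  intros Hc Hy; destruct (Rlt_dec y c) as [Hlt | Hge]; [now apply htilde_lt |].
  replace y with c by lra; unfold htilde.
  destruct (Rlt_dec c c); [lra |]; destruct (Rle_dec c c); [now apply Rmax_right | lra].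
Qed.

Lemma htilde_ge_c h c hs y : hs <= h c -> c <= y -> htilde h c hs y = h y.
Proof.
  intros Hc Hy; destruct (Rlt_dec c y) as [Hlt | Hle]; [now apply htilde_gt |].
  replace y with c by lra; unfold htilde.
  destruct (Rlt_dec c c); [lra |]; destruct (Rle_dec c c); [now apply Rmax_left | lra].
Qed.

Lemma left_cont_at_const I k x : left_cont_at I (fun _ => k) x.
Proof.
  intros eps Heps; exists 1; split; [lra |].
  intros y _ _ _; rewrite Rminus_diag, Rabs_R0; exact Heps.
Qed.

Lemma right_cont_at_const I k x : right_cont_at I (fun _ => k) x.
Proof.
  intros eps Heps; exists 1; split; [lra |].
  intros y _ _ _; rewrite Rminus_diag, Rabs_R0; exact Heps.
Qed.

Lemma left_cont_at_ext I f g x d : I x -> 0 < d ->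
  (forall y, I y -> x - d < y -> y <= x -> f y = g y) ->
  left_cont_at I f x -> left_cont_at I g x.
Proof.
  intros Ix Hd Hfg Hf eps Heps.
  destruct (Hf eps Heps) as [e [He Hy]].
  exists (Rmin d e); split; [now apply Rmin_glb_lt |].
  intros y Iy Hy1 Hy2; pose proof (Rmin_l d e); pose proof (Rmin_r d e).
  rewrite <- (Hfg y), <- (Hfg x) by (auto; lra); apply Hy; auto; lra.
Qed.

Lemma right_cont_at_ext I f g x d : I x -> 0 < d ->
  (forall y, I y -> x <= y -> y < x + d -> f y = g y) ->
  right_cont_at I f x -> right_cont_at I g x.
Proof.
  intros Ix Hd Hfg Hf eps Heps.
  destruct (Hf eps Heps) as [e [He Hy]].
  exists (Rmin d e); split; [now apply Rmin_glb_lt |].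
  intros y Iy Hy1 Hy2; pose proof (Rmin_l d e); pose proof (Rmin_r d e).
  rewrite <- (Hfg y), <- (Hfg x) by (auto; lra); apply Hy; auto; lra.
Qed.

Lemma htilde_left_continuous I h c hs : h c <= hs ->
  left_continuous I h -> left_continuous I (htilde h c hs).
Proof.
  intros Hc Hh x Ix.
  destruct (Rle_or_lt x c) as [Hx | Hx].
  - apply (left_cont_at_ext I (fun _ => hs) _ x 1); auto; [lra | | apply left_cont_at_const].
    intros y _ _ Hy; symmetry; apply htilde_le_c; lra.
  - apply (left_cont_at_ext I h _ x (x - c)); auto; [lra |].
    intros y _ Hy _; symmetry; apply htilde_gt; lra.
Qed.

Lemma htilde_right_continuous I h c hs : hs <= h c ->
  right_continuous I h -> right_continuous I (htilde h c hs).
Proof.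
  intros Hc Hh x Ix.
  destruct (Rlt_or_le x c) as [Hx | Hx].
  - apply (right_cont_at_ext I (fun _ => hs) _ x (c - x)); auto; [lra | | apply right_cont_at_const].
    intros y _ _ Hy; symmetry; apply htilde_lt; lra.
  - apply (right_cont_at_ext I h _ x 1); auto; [lra |].
    intros y _ Hy _; symmetry; apply htilde_ge_c; lra.
Qed.

Lemma left_cont_at_le I h c M : left_cont_at I h c ->
  (forall d, 0 < d -> exists y, I y /\ c - d < y /\ y <= c /\ h y <= M) ->
  h c <= M.
Proof.
  intros Hh Hnear; apply Rnot_lt_le; intros HM.
  destruct (Hh (h c - M)) as [d [Hd Hy]]; [lra |].
  destruct (Hnear d Hd) as [y [Iy [Hy1 [Hy2 HyM]]]].
  specialize (Hy y Iy Hy1 Hy2); apply Rabs_def2 in Hy; lra.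
Qed.

Lemma right_cont_at_ge I h c M : right_cont_at I h c ->
  (forall d, 0 < d -> exists y, I y /\ c <= y /\ y < c + d /\ M <= h y) ->
  M <= h c.
Proof.
  intros Hh Hnear; apply Rnot_lt_le; intros HM.
  destruct (Hh (M - h c)) as [d [Hd Hy]]; [lra |].
  destruct (Hnear d Hd) as [y [Iy [Hy1 [Hy2 HyM]]]].
  specialize (Hy y Iy Hy1 Hy2); apply Rabs_def2 in Hy; lra.
Qed.

Lemma interval_points_left I a c : is_interval I -> I a -> I c -> a < c ->
  forall d, 0 < d -> exists y, I y /\ c - d < y /\ y < c.
Proof.
  intros HI Ia Ic Hac d Hd.
  exists (Rmax a (c - d / 2)); pose proof (Rmax_l a (c - d / 2)); pose proof (Rmax_r a (c - d / 2)).
  assert (Hlt : Rmax a (c - d / 2) < c) by (apply Rmax_lub_lt; lra).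
  repeat split; [apply (HI a _ c) | |]; auto; lra.
Qed.

Lemma upper_tail_points_near_threshold I h c : upper_tail_threshold I h c ->
  forall d, 0 < d -> exists x', upper_tail_point I h x' /\ c <= x' /\ x' < c + d.
Proof.
  intros [_ [Hlow Hinf]] d Hd.
  apply NNPP; intros Hnone.
  assert (c + d <= c); [| lra].
  apply Hinf; intros x' Hx'; apply Rnot_lt_le; intros Hlt.
  apply Hnone; exists x'; auto.
Qed.

Lemma upper_tail_threshold_right_cont_ge I h c : upper_tail_threshold I h c ->
  right_cont_at I h c -> forall x, I x -> x < c -> h x <= h c.
Proof.
  intros Hth Hh x Ix Hx; apply (right_cont_at_ge I h c); auto.
  intros d Hd; destruct (upper_tail_points_near_threshold I h c Hth d Hd)
    as [x' [[Ix' [Hbelow _]] [Hx'1 Hx'2]]].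
  exists x'; repeat split; auto; apply Hbelow; auto; lra.
Qed.

Theorem lemma3p5 (I J : R -> Prop) (h : R -> R) (c hs : R) :
  is_interval I -> is_interval J ->
  (forall x, I x -> J (h x)) ->
  jump_regular I h ->
  upper_tail_threshold I h c ->
  (exists a b, I a /\ I b /\ a < c /\ c < b) ->
  is_lub (fun y => exists x, I x /\ x < c /\ y = h x) hs ->
  (left_continuous I h -> left_continuous I (htilde h c hs)) /\
  (right_continuous I h -> right_continuous I (htilde h c hs)).
Proof.
  intros HI _ _ _ Hth [a [b [Ia [Ib [Hac Hcb]]]]] [Hub Hlub].
  assert (Ic : I c) by (apply (HI a c b); auto; lra).
  split; intros Hh.
  - apply htilde_left_continuous; auto.
    apply (left_cont_at_le I h c); auto.
    intros d Hd; destruct (interval_points_left I a c HI Ia Ic Hac d Hd) as [y [Iy [Hy1 Hy2]]].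
    exists y; repeat split; auto; [lra |].
    apply Hub; exists y; auto.
  - apply htilde_right_continuous; auto.
    apply Hlub; intros v [x [Ix [Hx ->]]].
    exact (upper_tail_threshold_right_cont_ge I h c Hth (Hh c Ic) x Ix Hx).
Qed.
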